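(* Let $A\in N_C$ be a concept name, let $E,F,G$ be regular role expressions, and let $C_0$ be an $\mathcal{FL}_{\bot\mathit{reg}}$ concept description. (1) If $C_0$ does not contain $\bot$ and does not contain the concept name $A$, then $\forall E.A\sqcap\forall F.\bot\sqcap C_0\sqsubseteq\forall G.A$ holds if and only if $\forall E.A\sqcap\forall F.\bot\sqsubseteq\forall G.A$ holds. (2) If $C_0$ does not contain $\bot$, then $\forall F.\bot\sqcap C_0\sqsubseteq\forall G.\bot$ holds if and only if $\forall F.\bot\sqsubseteq\forall G.\bot$ holds. Here a subsumption $X\sqsubseteq Y$ ''holds'' means $X^{\mathcal I}\subseteq Y^{\mathcal I}$ for every interpretation $\mathcal I$.
   Context: Let $N_C$ and $N_R$ be disjoint countably infinite sets of concept names and role names. Regular role expressions are generated by $E ::= \emptyset \mid \varepsilon \mid r \mid (E+E) \mid (EE) \mid E^{*}$ with $r\in N_R$, with languages $\mathcal L(E)\subseteq N_R^*$ defined as usual. $\mathcal{FL}_{\bot\mathit{reg}}$ concept descriptions are generated by $C ::= A \mid \top \mid \bot \mid (C\sqcap C) \mid \forall E.C$ with $A\in N_C$. An interpretation $\mathcal I=(\Delta^{\mathcal I},\cdot^{\mathcal I})$ has nonempty domain, $A^{\mathcal I}\subseteq\Delta^{\mathcal I}$, $r^{\mathcal I}\subseteq(\Delta^{\mathcal I})^2$; $E^{\mathcal I}$ is the union over words $r_1\cdots r_n\in\mathcal L(E)$ of $r_1^{\mathcal I}\circ\cdots\circ r_n^{\mathcal I}$ (identity for the empty word); $\top^{\mathcal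 I}=\Delta^{\mathcal I}$, $\bot^{\mathcal I}=\emptyset$, $(C\sqcap D)^{\mathcal I}=C^{\mathcal I}\cap D^{\mathcal I}$, $(\forall E.C)^{\mathcal I}=\{x\mid y\in C^{\mathcal I}$ for all $y$ with $(x,y)\in E^{\mathcal I}\}$. *)

From Stdlib Require Import List.
Import ListNotations.

Definition cname := nat.
Definition rname := nat.

Inductive rexp : Type :=
| REmpty : rexp
| REps : rexp
| RRole : rname -> rexp
| RPlus : rexp -> rexp -> rexp
| RConc : rexp -> rexp -> rexp
| RStar : rexp -> rexp.

Inductive lang : rexp -> list rname -> Prop :=
| L_eps : lang REps []
| L_role : forall r, lang (RRole r) [r]
| L_plusl : forall E F w, lang E w -> lang (RPlus E F) w
| L_plusr : forall E F w, lang F w -> lang (RPlus E F) w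
| L_conc : forall E F u v, lang E u -> lang F v -> lang (RConc E F) (u ++ v)
| L_star0 : forall E, lang (RStar E) []
| L_starS : forall E u v, lang E u -> lang (RStar E) v -> lang (RStar E) (u ++ v).

Inductive concept : Type :=
| CName : cname -> concept
| CTop : concept
| CBot : concept
| CAnd : concept -> concept -> concept
| CAll : rexp -> concept -> concept.

Record interp : Type := {
  dom : Type;
  dom_inhabited : dom;
  iconc : cname -> dom -> Prop;
  irole : rname -> dom -> dom -> Prop
}.

Fixpoint word_rel (I : interp) (w : list rname) : dom I -> dom I -> Prop :=
  match w with
  | [] => fun x y => x = y
  | r :: w' => fun x y => exists z, irole I r x z /\ word_rel I w' z y
  end.

Definition rexp_rel (I : interp) (E : rexp) (x y : dom I) : Prop :=
  exists w, lang E w /\ word_rel I w x y.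

Fixpoint cinterp (I : interp) (C : concept) : dom I -> Prop :=
  match C with
  | CName A => iconc I A
  | CTop => fun _ => True
  | CBot => fun _ => False
  | CAnd C D => fun x => cinterp I C x /\ cinterp I D x
  | CAll E C => fun x => forall y, rexp_rel I E x y -> cinterp I C y
  end.

Definition subsumed (C D : concept) : Prop :=
  forall I : interp, forall x : dom I, cinterp I C x -> cinterp I D x.

Fixpoint contains_bot (C : concept) : bool :=
  match C with
  | CBot => true
  | CName _ | CTop => false
  | CAnd C D => contains_bot C || contains_bot D
  | CAll _ C => contains_bot C
  end.

Fixpoint contains_name (A : cname) (C : concept) : bool :=
  match C with
  | CName B => Nat.eqb A B
  | CTop | CBot => false
  | CAnd C D => contains_name A C || contains_name A D
  | CAll _ C => contains_name A C
  end.

From Stdlib Require Import Bool Arith.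

(* A ⊥-free concept is true everywhere once the concept names occurring in it
   are interpreted as the whole domain.  Reinterpreting every name except A
   (for (1)), resp. every name (for (2)), as the whole domain changes neither
   the role relations nor the meaning of the other concepts in the
   subsumption, so C0 becomes vacuous and any counterexample to the
   subsumption without C0 is a counterexample to the one with C0. *)

Definition reinterp_names (I : interp) (P : cname -> dom I -> Prop) : interp :=
  {| dom := dom I; dom_inhabited := dom_inhabited I;
     iconc := P; irole := irole I |}.

Definition keep_name (A : cname) (I : interp) : cname -> dom I -> Prop :=
  fun B => if Nat.eqb A B then iconc I B else fun _ => True.

Lemma word_rel_reinterp_names (I : interp) (P : cname -> dom I -> Prop)
    (w : list rname) (x y : dom I) :
  word_rel (reinterp_names I P) w x y <-> word_rel I w x y.
Proof.
  revert x; induction w as [|r w IHw]; intros x; simpl; [reflexivity|].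
  split; intros [z [Hr Hw]]; exists z; split; try apply IHw; assumption.
Qed.

Lemma rexp_rel_reinterp_names (I : interp) (P : cname -> dom I -> Prop)
    (E : rexp) (x y : dom I) :
  rexp_rel (reinterp_names I P) E x y <-> rexp_rel I E x y.
Proof.
  unfold rexp_rel; split; intros [w [Hw Hrel]]; exists w;
    rewrite word_rel_reinterp_names in *; auto.
Qed.

Lemma cinterp_reinterp_names (I : interp) (P : cname -> dom I -> Prop)
    (C : concept) :
  (forall B, contains_name B C = true -> forall y, P B y <-> iconc I B y) ->
  forall y, cinterp (reinterp_names I P) C y <-> cinterp I C y.
Proof.
  induction C as [B| | |C IHC D IHD|R C IHC]; simpl; intros Hagree y.
  - apply Hagree; simpl; apply Nat.eqb_refl.
  - tauto.
  - tauto.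
  - rewrite IHC, IHD; [reflexivity | |]; intros B HB; apply Hagree;
      rewrite HB; auto using orb_true_r.
  - split; intros H z Hz; apply IHC; auto; apply H;
      rewrite rexp_rel_reinterp_names in *; assumption.
Qed.

Lemma cinterp_bot_free_full (I : interp) (C : concept) :
  contains_bot C = false ->
  (forall B, contains_name B C = true -> forall y, iconc I B y) ->
  forall y, cinterp I C y.
Proof.
  induction C as [B| | |C IHC D IHD|R C IHC]; simpl; intros Hbot Hfull y;
    try discriminate.
  - apply Hfull; simpl; apply Nat.eqb_refl.
  - exact Logic.I.
  - apply orb_false_iff in Hbot as [HbC HbD].
    split; [apply IHC | apply IHD]; auto; intros B HB; apply Hfull;
      rewrite HB; auto using orb_true_r.
  - intros z _; apply IHC; auto.
Qed.

Lemma subsumed_andl (C C0 D : concept) :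
  subsumed C D -> subsumed (CAnd C C0) D.
Proof. intros H I x [Hx _]; exact (H I x Hx). Qed.

Lemma subsumed_drop_conjunct (C C0 D : concept) (I : interp)
    (P : cname -> dom I -> Prop) :
  contains_bot C0 = false ->
  (forall B, contains_name B C0 = true -> forall y, P B y) ->
  (forall B, contains_name B C = true -> forall y, P B y <-> iconc I B y) ->
  (forall B, contains_name B D = true -> forall y, P B y <-> iconc I B y) ->
  subsumed (CAnd C C0) D -> forall x, cinterp I C x -> cinterp I D x.
Proof.
  intros Hbot Hfull HC HD H x Hx.
  apply (cinterp_reinterp_names I P D HD), H; split.
  - apply cinterp_reinterp_names; assumption.
  - apply (cinterp_bot_free_full (reinterp_names I P)); assumption.
Qed.

Lemma keep_name_agree (A : cname) (I : interp) (C : concept) :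
  (forall B, contains_name B C = true -> B = A) ->
  forall B, contains_name B C = true -> forall y, keep_name A I B y <-> iconc I B y.
Proof.
  intros HA B HB y; rewrite (HA B HB); unfold keep_name; rewrite Nat.eqb_refl.
  reflexivity.
Qed.

Lemma keep_name_full (A : cname) (I : interp) (C : concept) :
  contains_name A C = false ->
  forall B, contains_name B C = true -> forall y, keep_name A I B y.
Proof.
  intros HA B HB y; unfold keep_name.
  destruct (Nat.eqb_spec A B) as [<-|_]; [congruence | exact Logic.I].
Qed.

Theorem lemma1 (A : cname) (E F G : rexp) (C0 : concept) :
  (contains_bot C0 = false -> contains_name A C0 = false ->
    (subsumed (CAnd (CAnd (CAll E (CName A)) (CAll F CBot)) C0) (CAll G (CName A))
     <-> subsumed (CAnd (CAll E (CName A)) (CAll F CBot)) (CAll G (CName A))))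
  /\
  (contains_bot C0 = false ->
    (subsumed (CAnd (CAll F CBot) C0) (CAll G CBot)
     <-> subsumed (CAll F CBot) (CAll G CBot))).
Proof.
  split.
  - intros Hbot HA; split; [|apply subsumed_andl].
    intros H I.
    apply (subsumed_drop_conjunct _ C0 _ I (keep_name A I) Hbot
             (keep_name_full A I C0 HA)); [| | exact H];
      apply keep_name_agree; simpl; intros B HB.
    + apply orb_true_iff in HB as [HB|HB]; [apply Nat.eqb_eq, HB | discriminate].
    + apply Nat.eqb_eq, HB.
  - intros Hbot; split; [|apply subsumed_andl].
    intros H I.
    apply (subsumed_drop_conjunct _ C0 _ I (fun _ _ => True) Hbot);
      simpl; auto; discriminate.
Qed.
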